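(* \[ \sum_{k=1}^{\infty}(-1)^k(4k+1)\frac{(\tfrac{1}{2})_k^3}{k!^3}\sum_{i=1}^{2k}\frac{(-1)^i}{i^2}=\frac{\pi}{12}. \]
   Context: For a complex number $x$ and a nonnegative integer $n$, $(x)_n=\Gamma(x+n)/\Gamma(x)=x(x+1)\cdots(x+n-1)$ denotes the shifted factorial (Pochhammer symbol), with $(x)_0=1$. The series is understood as the limit of its partial sums. *)

From Stdlib Require Import Reals Arith.Factorial.
Open Scope R_scope.

Fixpoint poch (x : R) (n : nat) : R :=
  match n with
  | O => 1
  | S m => poch x m * (x + INR m)
  end.

Definition inner_sum (k : nat) : R :=
  sum_f 1 (2 * k) (fun i => (-1) ^ i / (INR i) ^ 2).

Definition term (k : nat) : R :=
  (-1) ^ k * (4 * INR k + 1) * (poch (1/2) k) ^ 3 / (INR (fact k)) ^ 3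
  * inner_sum k.

Fixpoint partial_sum (N : nat) : R :=
  match N with
  | O => 0
  | S m => partial_sum m + term (S m)
  end.

From Stdlib Require Import Reals Lra Lia Arith.Factorial Arith.Compare_dec.
From Coquelicot Require Import Coquelicot.
Open Scope R_scope.

(* Write a_k = (1/2)_k/k!, H_k = sum_{i=1}^{2k} (-1)^i/i^2 and
   l_n(k) = prod_{j<k} (n-j)/(n+3/2+j), which vanishes for k > n.  Two WZ pairs give the
   terminating identities
     sum_{k<=n} (-1)^k (4k+1) a_k^3 l_n(k)       = (2n+1) a_n^2,
     sum_{k<=n} (-1)^k (4k+1) a_k^3 l_n(k) 4 H_k = (2n+1) a_n^2 sum_{j=1}^n 1/j^2.
   The integrals of cos^m and t^2 cos^(2n) over [0, pi/2] give Wallis' limit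
   (2n+1) a_n^2 -> 2/pi and Euler's sum_j 1/j^2 = pi^2/6, so the second right-hand side
   divided by 4 tends to pi/12.  The series itself converges as an alternating series
   with decreasing terms, and since l_n(k) decreases in k from l_n(0) = 1 and tends to 1
   for each fixed k, summation by parts removes the weights l_n(k) in the limit. *)

(** * Terminating identities *)

Definition half_poch (k : nat) : R := poch (1/2) k / INR (fact k).

Definition alt_cube (k : nat) : R := (-1) ^ k * half_poch k ^ 3.

Fixpoint alt_sq_sum (k : nat) : R :=
  match k with
  | O => 0
  | S m => alt_sq_sum m + 1 / (2 * INR m + 2) ^ 2 - 1 / (2 * INR m + 1) ^ 2
  end.

Fixpoint weight (n k : nat) : R :=
  match k with
  | O => 1
  | S m => weight n m * (INR n - INR m) / (INR n + 3/2 + INR m)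
  end.

Definition wallis (n : nat) : R := (2 * INR n + 1) * half_poch n ^ 2.

Definition wallis_ratio (n : nat) : R :=
  (2 * INR n + 1) * (2 * INR n + 3) / (4 * (INR n + 1) ^ 2).

Fixpoint basel (n : nat) : R :=
  match n with
  | O => 0
  | S m => basel m + 1 / (INR m + 1) ^ 2
  end.

Definition dougall (n k : nat) : R := (4 * INR k + 1) * alt_cube k * weight n k.

(* WZ certificates of [sum_dougall] and [sum_dougall_H] (Zeilberger's algorithm). *)
Definition dougall_cert (n k : nat) : R :=
  - (INR k ^ 3 * (2 * INR n + 2 * INR k + 3)) / (INR n + 1) ^ 3
  * alt_cube k * weight (S n) k.

Definition dougall_H_cert (n k : nat) : R :=
  4 * alt_sq_sum k * dougall_cert n k
  + INR k * (2 * INR n + 2 * INR k + 3) / (INR n + 1) ^ 3 * alt_cube k * weight (S n) k.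

Lemma weight_S n k :
  weight n (S k) = weight n k * (INR n - INR k) / (INR n + 3/2 + INR k).
Proof. reflexivity. Qed.

Lemma alt_sq_sum_S k :
  alt_sq_sum (S k) = alt_sq_sum k + 1 / (2 * INR k + 2) ^ 2 - 1 / (2 * INR k + 1) ^ 2.
Proof. reflexivity. Qed.

Lemma basel_S n : basel (S n) = basel n + 1 / (INR n + 1) ^ 2.
Proof. reflexivity. Qed.

Lemma INR_double n : INR (2 * n) = 2 * INR n.
Proof. rewrite mult_INR. reflexivity. Qed.

Lemma half_poch_0 : half_poch 0 = 1.
Proof. unfold half_poch; simpl; field. Qed.

Lemma half_poch_S k : half_poch (S k) = half_poch k * (1/2 + INR k) / (INR k + 1).
Proof.
  unfold half_poch; simpl poch. rewrite fact_simpl, mult_INR, S_INR.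
  assert (0 < INR (fact k)) by (apply lt_0_INR, lt_O_fact).
  pose proof (pos_INR k).
  field; lra.
Qed.

Lemma half_poch_pos k : 0 < half_poch k.
Proof.
  unfold half_poch. apply Rdiv_lt_0_compat; [| apply lt_0_INR, lt_O_fact].
  induction k as [|k IH]; simpl; [lra |].
  pose proof (pos_INR k). apply Rmult_lt_0_compat; lra.
Qed.

Lemma alt_cube_S k :
  alt_cube (S k) = alt_cube k * (- (2 * INR k + 1) ^ 3 / (2 * INR k + 2) ^ 3).
Proof.
  unfold alt_cube. rewrite half_poch_S. simpl pow.
  pose proof (pos_INR k). field. lra.
Qed.

Lemma wallis_S n : wallis (S n) = wallis_ratio n * wallis n.
Proof.
  unfold wallis, wallis_ratio. rewrite half_poch_S, S_INR.
  pose proof (pos_INR n). field. lra.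
Qed.

Lemma weight_vanish n k : (n < k)%nat -> weight n k = 0.
Proof.
  induction 1; rewrite weight_S.
  - rewrite Rminus_diag. unfold Rdiv. ring.
  - rewrite IHle. unfold Rdiv. ring.
Qed.

Lemma weight_shift n k :
  weight n k = weight (S n) k * ((INR n + 1 - INR k) * (INR n + 3/2 + INR k))
               / ((INR n + 1) * (INR n + 3/2)).
Proof.
  pose proof (pos_INR n).
  induction k as [|k IH].
  - simpl. field. lra.
  - rewrite !weight_S, IH, !S_INR. pose proof (pos_INR k). field. lra.
Qed.

Lemma dougall_wz n k :
  dougall (S n) k - wallis_ratio n * dougall n k = dougall_cert n (S k) - dougall_cert n k.
Proof.
  unfold dougall, dougall_cert, wallis_ratio.
  rewrite alt_cube_S, weight_S, (weight_shift n k), !S_INR.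
  pose proof (pos_INR k). pose proof (pos_INR n).
  field. lra.
Qed.

Lemma dougall_H_wz n k :
  4 * alt_sq_sum k * dougall (S n) k - wallis_ratio n * (4 * alt_sq_sum k * dougall n k)
  - dougall (S n) k / (INR n + 1) ^ 2
  = dougall_H_cert n (S k) - dougall_H_cert n k.
Proof.
  unfold dougall_H_cert, dougall, dougall_cert, wallis_ratio.
  rewrite alt_cube_S, weight_S, alt_sq_sum_S, (weight_shift n k), !S_INR.
  pose proof (pos_INR k). pose proof (pos_INR n).
  field. lra.
Qed.

Lemma sum_telescope (f : nat -> R) N :
  sum_f_R0 (fun k => f (S k) - f k) N = f (S N) - f O.
Proof. induction N; simpl; [ring | rewrite IHN; ring]. Qed.

Lemma sum_dougall n : sum_f_R0 (dougall n) n = wallis n.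
Proof.
  induction n as [|n IH].
  - unfold dougall, alt_cube, wallis. simpl. rewrite half_poch_0. ring.
  - rewrite (sum_eq _ (fun k => dougall n k * wallis_ratio n
                               + (dougall_cert n (S k) - dougall_cert n k)))
      by (intros k _; rewrite <- dougall_wz; ring).
    rewrite sum_plus, sum_telescope, <- scal_sum, tech5, IH, wallis_S.
    unfold dougall at 1, dougall_cert.
    rewrite weight_vanish, (weight_vanish (S n) (S (S n))) by lia.
    simpl (INR 0). unfold Rdiv. ring.
Qed.

Lemma sum_dougall_H n :
  sum_f_R0 (fun k => 4 * alt_sq_sum k * dougall n k) n = wallis n * basel n.
Proof.
  induction n as [|n IH].
  - simpl. ring.
  - rewrite (sum_eq _ (fun k => (4 * alt_sq_sum k * dougall n k * wallis_ratio n
                                 + dougall (S n) k * / (INR n + 1) ^ 2)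
                                + (dougall_H_cert n (S k) - dougall_H_cert n k)))
      by (intros k _; rewrite <- dougall_H_wz; unfold Rdiv; ring).
    rewrite sum_plus, sum_telescope, sum_plus, <- !scal_sum, sum_dougall, tech5, IH.
    unfold dougall at 1, dougall_H_cert, dougall_cert.
    rewrite weight_vanish, (weight_vanish (S n) (S (S n))) by lia.
    rewrite wallis_S, basel_S. simpl (alt_sq_sum 0). simpl (INR 0).
    pose proof (pos_INR n). field. lra.
Qed.

Lemma Un_cv_const c : Un_cv (fun _ => c) c.
Proof. apply is_lim_seq_Reals, is_lim_seq_const. Qed.

Lemma cv_infty_INR_S : cv_infty (fun n => INR n + 1).
Proof.
  apply is_lim_seq_p_infty_Reals.
  apply (is_lim_seq_ext (fun n => INR (S n))); [intro n; apply S_INR |].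
  now apply (is_lim_seq_incr_1 INR p_infty), is_lim_seq_INR.
Qed.

Lemma Un_cv_div_INR_S C : Un_cv (fun n => C / (INR n + 1)) 0.
Proof.
  replace 0 with (C * 0) by ring.
  apply (CV_mult (fun _ => C)); [apply Un_cv_const | exact (cv_infty_cv_0 _ cv_infty_INR_S)].
Qed.

Lemma Un_cv_ext (f g : nat -> R) l : (forall n, f n = g n) -> Un_cv f l -> Un_cv g l.
Proof.
  intros e h eps he. destruct (h eps he) as [N hN].
  exists N. intros n hn. rewrite <- e. auto.
Qed.

Lemma Un_cv_abs_le (u v : nat -> R) l N0 :
  (forall n, (N0 <= n)%nat -> Rabs (u n - l) <= v n) -> Un_cv v 0 -> Un_cv u l.
Proof.
  intros h hv eps he. destruct (hv eps he) as [N hN]. exists (max N N0).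
  intros n hn. unfold Rdist. apply Rle_lt_trans with (v n); [apply h; lia |].
  specialize (hN n ltac:(lia)). unfold Rdist in hN. rewrite Rminus_0_r in hN.
  exact (Rle_lt_trans _ _ _ (Rle_abs _) hN).
Qed.

(** * Wallis integrals *)

Lemma RInt_lin_comb (f g : R -> R) a b (p q : R) : ex_RInt f a b -> ex_RInt g a b ->
  RInt (fun x => p * f x - q * g x) a b = p * RInt f a b - q * RInt g a b.
Proof.
  intros hf hg. apply (is_RInt_unique (V := R_CompleteNormedModule)).
  apply (is_RInt_minus (V := R_NormedModule) (fun x => scal p (f x)) (fun x => scal q (g x)));
    apply (is_RInt_scal (V := R_NormedModule)), (RInt_correct (V := R_CompleteNormedModule));
    assumption.
Qed.

Lemma ex_RInt_lin_comb (f g : R -> R) a b p q : ex_RInt f a b -> ex_RInt g a b ->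
  ex_RInt (fun x => p * f x - q * g x) a b.
Proof.
  intros hf hg.
  apply (ex_RInt_minus (V := R_NormedModule) (fun x => scal p (f x)) (fun x => scal q (g x)));
    apply (ex_RInt_scal (V := R_NormedModule)); assumption.
Qed.

Lemma RInt_Rplus (f g : R -> R) a b : ex_RInt f a b -> ex_RInt g a b ->
  RInt (fun x => f x + g x) a b = RInt f a b + RInt g a b.
Proof. exact (RInt_plus (V := R_CompleteNormedModule) f g a b). Qed.

Lemma RInt_is_derive (f df : R -> R) a b :
  (forall x, Rmin a b <= x <= Rmax a b -> is_derive f x (df x)) ->
  (forall x, Rmin a b <= x <= Rmax a b -> ex_derive df x) ->
  RInt df a b = f b - f a.
Proof.
  intros h1 h2. apply (is_RInt_unique (V := R_CompleteNormedModule)).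
  apply (is_RInt_derive (V := R_CompleteNormedModule) f df a b h1).
  intros x hx. exact (ex_derive_continuous df x (h2 x hx)).
Qed.

(* [auto_derive] leaves [INR (S m)] in this unfolded form. *)
Lemma INR_S_match m : (match m with O => 1 | S _ => INR m + 1 end) = INR m + 1.
Proof. destruct m; simpl; ring. Qed.

Lemma cos_mem_01 x : 0 <= x <= PI/2 -> 0 <= cos x <= 1.
Proof. intros [h1 h2]. split; [apply cos_ge_0; lra | apply COS_bound]. Qed.

Definition wallis_int (m : nat) : R := RInt (fun t => cos t ^ m) 0 (PI/2).

Lemma ex_RInt_cos_pow m : ex_RInt (fun t => cos t ^ m) 0 (PI/2).
Proof.
  apply (ex_RInt_continuous (V := R_CompleteNormedModule)); intros.
  apply (ex_derive_continuous (fun t => cos t ^ m)); auto_derive; exact I.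
Qed.

Lemma is_derive_sin_cos_pow (m : nat) x :
  is_derive (fun t => sin t * cos t ^ (S m)) x
    ((INR m + 2) * cos x ^ (S (S m)) - (INR m + 1) * cos x ^ m).
Proof.
  auto_derive; [exact I |]. rewrite INR_S_match.
  transitivity (cos x ^ 2 * cos x ^ m - sin x ^ 2 * ((INR m + 1) * cos x ^ m)); [ring |].
  replace (sin x ^ 2) with (1 - cos x ^ 2) by (rewrite <- (sin2_cos2 x); unfold Rsqr; ring).
  simpl. ring.
Qed.

Lemma wallis_int_rec m : (INR m + 2) * wallis_int (S (S m)) = (INR m + 1) * wallis_int m.
Proof.
  assert (h := RInt_is_derive (fun t => sin t * cos t ^ (S m))
     (fun x => (INR m + 2) * cos x ^ (S (S m)) - (INR m + 1) * cos x ^ m) 0 (PI/2)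
     (fun x _ => is_derive_sin_cos_pow m x) ltac:(intros; auto_derive; exact I)).
  rewrite RInt_lin_comb in h by apply ex_RInt_cos_pow.
  rewrite cos_PI2, sin_0, pow_i in h by lia. unfold wallis_int. lra.
Qed.

Lemma wallis_int_0 : wallis_int 0 = PI/2.
Proof.
  unfold wallis_int. rewrite (RInt_is_derive (fun t => t) (fun t => cos t ^ 0)); [ring | |];
    intros; auto_derive; try exact I; simpl; ring.
Qed.

Lemma wallis_int_1 : wallis_int 1 = 1.
Proof.
  unfold wallis_int. rewrite (RInt_is_derive sin (fun t => cos t ^ 1)).
  - rewrite sin_PI2, sin_0. ring.
  - intros; auto_derive; [exact I | simpl; ring].
  - intros; auto_derive; exact I.
Qed.

Lemma wallis_int_even n : wallis_int (2 * n) = PI / 2 * half_poch n.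
Proof.
  induction n as [|n IH].
  - rewrite Nat.mul_0_r, half_poch_0, wallis_int_0. ring.
  - replace (2 * S n)%nat with (S (S (2 * n))) by lia.
    pose proof (wallis_int_rec (2 * n)) as hr. rewrite INR_double, IH in hr.
    rewrite half_poch_S. pose proof (pos_INR n).
    apply (Rmult_eq_reg_l (2 * INR n + 2)); [| lra]. rewrite hr. field. lra.
Qed.

Lemma wallis_int_odd n : wallis_int (S (2 * n)) = 1 / ((2 * INR n + 1) * half_poch n).
Proof.
  induction n as [|n IH].
  - rewrite Nat.mul_0_r, half_poch_0, wallis_int_1. simpl. field.
  - replace (S (2 * S n))%nat with (S (S (S (2 * n)))) by lia.
    pose proof (wallis_int_rec (S (2 * n))) as hr. rewrite S_INR, INR_double, IH in hr.
    rewrite half_poch_S, S_INR. pose proof (pos_INR n). pose proof (half_poch_pos n).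
    apply (Rmult_eq_reg_l (2 * INR n + 1 + 2)); [| lra]. rewrite hr. field. lra.
Qed.

Lemma wallis_int_decr m : wallis_int (S m) <= wallis_int m.
Proof.
  unfold wallis_int. pose proof PI_RGT_0.
  apply RInt_le; try apply ex_RInt_cos_pow; [lra |].
  intros x hx. destruct (cos_mem_01 x) as [h1 h2]; [lra |].
  simpl. rewrite <- (Rmult_1_l (cos x ^ m)) at 2.
  apply Rmult_le_compat_r; [apply pow_le |]; lra.
Qed.

Lemma wallis_lower n : 2 / PI <= wallis n.
Proof.
  pose proof (wallis_int_decr (2 * n)) as h. rewrite wallis_int_even, wallis_int_odd in h.
  pose proof (half_poch_pos n). pose proof (pos_INR n). pose proof PI_RGT_0.
  unfold wallis. apply Rmult_le_reg_l with (PI / 2); [lra |].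
  replace (PI / 2 * (2 / PI)) with 1 by (field; lra).
  apply Rmult_le_compat_r with (r := (2 * INR n + 1) * half_poch n) in h; [| nra].
  replace (1 / ((2 * INR n + 1) * half_poch n) * ((2 * INR n + 1) * half_poch n)) with 1 in h
    by (field; lra).
  nra.
Qed.

Lemma wallis_upper n : wallis (S n) <= 2 / PI * (1 + 1 / (2 * INR n + 2)).
Proof.
  pose proof (wallis_int_decr (S (2 * n))) as h.
  replace (S (S (2 * n))) with (2 * S n)%nat in h by lia.
  rewrite wallis_int_even, wallis_int_odd, half_poch_S in h.
  pose proof (half_poch_pos n). pose proof (pos_INR n). pose proof PI_RGT_0.
  set (b := half_poch n) in *.
  apply Rmult_le_compat_r with (r := (2 * INR n + 1) * b) in h; [| nra].
  replace (1 / ((2 * INR n + 1) * b) * ((2 * INR n + 1) * b)) with 1 in h by (field; lra).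
  unfold wallis. rewrite half_poch_S, S_INR. fold b.
  apply Rmult_le_reg_l with (PI / 2); [lra |].
  replace (PI / 2 * (2 / PI * (1 + 1 / (2 * INR n + 2))))
    with ((2 * INR n + 3) / (2 * INR n + 2)) by (field; lra).
  replace (PI / 2 * ((2 * (INR n + 1) + 1) * (b * (1 / 2 + INR n) / (INR n + 1)) ^ 2))
    with (PI / 2 * (b * (1 / 2 + INR n) / (INR n + 1)) * ((2 * INR n + 1) * b)
          * ((2 * INR n + 3) / (2 * INR n + 2))) by (field; lra).
  rewrite <- (Rmult_1_l ((2 * INR n + 3) / (2 * INR n + 2))) at 2.
  apply Rmult_le_compat_r; [apply Rlt_le, Rdiv_lt_0_compat |]; lra.
Qed.

Lemma wallis_cv : Un_cv wallis (2 / PI).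
Proof.
  apply (Un_cv_abs_le wallis (fun n => (2 / PI) / (INR n + 1)) _ 1); [| apply Un_cv_div_INR_S].
  intros [|m] hm; [lia |].
  pose proof (wallis_lower (S m)). pose proof (wallis_upper m).
  pose proof (pos_INR m). pose proof PI_RGT_0.
  rewrite Rabs_right, S_INR by lra.
  apply Rle_trans with ((2 / PI) * / (2 * INR m + 2)).
  - replace ((2 / PI) * / (2 * INR m + 2)) with (2 / PI * (1 + 1 / (2 * INR m + 2)) - 2 / PI)
      by (field; lra).
    lra.
  - apply Rmult_le_compat_l; [apply Rlt_le, Rdiv_lt_0_compat; lra |].
    apply Rinv_le_contravar; lra.
Qed.

(** * Euler's sum of inverse squares *)

Definition basel_int (n : nat) : R := RInt (fun t => t ^ 2 * cos t ^ (2 * n)) 0 (PI/2).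

Lemma ex_RInt_sq_cos_pow m : ex_RInt (fun t => t ^ 2 * cos t ^ m) 0 (PI/2).
Proof.
  apply (ex_RInt_continuous (V := R_CompleteNormedModule)); intros.
  apply (ex_derive_continuous (fun t => t ^ 2 * cos t ^ m)); auto_derive; exact I.
Qed.

Lemma is_derive_basel_primitive (m : nat) x :
  is_derive (fun t => t * cos t ^ (S (S m)) + (INR m + 2) / 2 * (t ^ 2 * sin t * cos t ^ (S m))) x
    (cos x ^ (S (S m)) + ((INR m + 2) ^ 2 / 2 * (x ^ 2 * cos x ^ (S (S m)))
                          - (INR m + 2) * (INR m + 1) / 2 * (x ^ 2 * cos x ^ m))).
Proof.
  auto_derive; [exact I |]. rewrite ?INR_S_match.
  pose proof (sin2_cos2 x) as hsc. unfold Rsqr in hsc.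
  transitivity (cos x * (cos x * cos x ^ m) - x * sin x * ((INR m + 2) * (cos x * cos x ^ m))
    + (INR m + 2) / 2 * (2 * x * sin x * cos x * cos x ^ m + x * x * cos x * cos x * cos x ^ m
       - x * x * (sin x * sin x) * (INR m + 1) * cos x ^ m)); [field |].
  replace (sin x * sin x) with (1 - cos x * cos x) by lra. simpl. field.
Qed.

Lemma basel_int_rec_gen m :
  wallis_int (S (S m))
  + ((INR m + 2) ^ 2 / 2 * RInt (fun x => x ^ 2 * cos x ^ (S (S m))) 0 (PI/2)
     - (INR m + 2) * (INR m + 1) / 2 * RInt (fun x => x ^ 2 * cos x ^ m) 0 (PI/2)) = 0.
Proof.
  rewrite <- (RInt_lin_comb (fun x => x ^ 2 * cos x ^ (S (S m))) (fun x => x ^ 2 * cos x ^ m))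
    by apply ex_RInt_sq_cos_pow.
  unfold wallis_int. rewrite <- RInt_Rplus;
    [| apply ex_RInt_cos_pow | apply ex_RInt_lin_comb; apply ex_RInt_sq_cos_pow].
  rewrite (RInt_is_derive _ _ 0 (PI/2) (fun x _ => is_derive_basel_primitive m x))
    by (intros; auto_derive; exact I).
  rewrite cos_PI2, sin_0, !pow_i by lia. ring.
Qed.

Lemma basel_int_rec n :
  wallis_int (S (S (2 * n)))
  + (2 * (INR n + 1) ^ 2 * basel_int (S n) - (INR n + 1) * (2 * INR n + 1) * basel_int n) = 0.
Proof.
  pose proof (basel_int_rec_gen (2 * n)) as h. rewrite INR_double in h.
  unfold basel_int. replace (2 * S n)%nat with (S (S (2 * n))) by lia.
  etransitivity; [| exact h]. field.
Qed.

Lemma basel_int_0 : basel_int 0 = PI ^ 3 / 24.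
Proof.
  unfold basel_int.
  rewrite (RInt_is_derive (fun t => t ^ 3 / 3) (fun t => t ^ 2 * cos t ^ (2 * 0))).
  - field.
  - intros; auto_derive; [exact I | simpl; field].
  - intros; auto_derive; exact I.
Qed.

Lemma mul_cos_le_sin t : 0 <= t <= PI / 2 -> t * cos t <= sin t.
Proof.
  intros ht. pose proof PI_RGT_0.
  assert (h : RInt (fun s => s * sin s) 0 t = (sin t - t * cos t) - (sin 0 - 0 * cos 0)).
  { apply (RInt_is_derive (fun s => sin s - s * cos s) (fun s => s * sin s));
      intros; auto_derive; try exact I; ring. }
  assert (0 <= RInt (fun s => s * sin s) 0 t); [| rewrite sin_0 in h; lra].
  apply RInt_ge_0; [lra | |].
  - apply (ex_RInt_continuous (V := R_CompleteNormedModule)); intros.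
    apply (ex_derive_continuous (fun s => s * sin s)); auto_derive; exact I.
  - intros x hx. apply Rmult_le_pos; [lra | apply sin_ge_0; lra].
Qed.

Lemma basel_int_nonneg n : 0 <= basel_int n.
Proof.
  unfold basel_int. pose proof PI_RGT_0. apply RInt_ge_0; [lra | apply ex_RInt_sq_cos_pow |].
  intros x hx. apply Rmult_le_pos; [apply pow2_ge_0 | apply pow_le]. apply cos_mem_01; lra.
Qed.

Lemma basel_int_upper n : basel_int (S n) <= wallis_int (2 * n) - wallis_int (S (S (2 * n))).
Proof.
  unfold basel_int, wallis_int. replace (2 * S n)%nat with (S (S (2 * n))) by lia.
  rewrite <- (Rmult_1_l (RInt (fun t => cos t ^ (2 * n)) _ _)),
          <- (Rmult_1_l (RInt (fun t => cos t ^ S (S (2 * n))) _ _)).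
  rewrite <- RInt_lin_comb by apply ex_RInt_cos_pow.
  pose proof PI_RGT_0.
  apply RInt_le; [lra | apply ex_RInt_sq_cos_pow | apply ex_RInt_lin_comb; apply ex_RInt_cos_pow |].
  intros x hx. destruct (cos_mem_01 x) as [h1 h2]; [lra |].
  pose proof (mul_cos_le_sin x ltac:(lra)) as ht.
  pose proof (sin2_cos2 x) as hsc. unfold Rsqr in hsc.
  assert (x * cos x * (x * cos x) <= sin x * sin x).
  { apply Rmult_le_compat; try lra; apply Rmult_le_pos; lra. }
  pose proof (pow_le (cos x) (2 * n) h1).
  replace (x ^ 2 * cos x ^ S (S (2 * n))) with (x * cos x * (x * cos x) * cos x ^ (2 * n))
    by (simpl; ring).
  replace (1 * cos x ^ (2 * n) - 1 * cos x ^ S (S (2 * n))) with (sin x * sin x * cos x ^ (2 * n))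
    by (replace (sin x * sin x) with (1 - cos x * cos x) by lra; simpl; ring).
  apply Rmult_le_compat_r; assumption.
Qed.

Definition basel_ratio (n : nat) : R := basel_int n / wallis_int (2 * n).

Lemma wallis_int_even_pos n : 0 < wallis_int (2 * n).
Proof. rewrite wallis_int_even. pose proof (half_poch_pos n). pose proof PI_RGT_0. nra. Qed.

Lemma wallis_int_even_S n :
  wallis_int (S (S (2 * n))) = (2 * INR n + 1) / (2 * INR n + 2) * wallis_int (2 * n).
Proof.
  pose proof (wallis_int_rec (2 * n)) as h. rewrite INR_double in h.
  pose proof (pos_INR n).
  apply (Rmult_eq_reg_l (2 * INR n + 2)); [| lra]. rewrite h. field. lra.
Qed.

Lemma basel_ratio_step n : basel_ratio n - basel_ratio (S n) = 1 / (2 * (INR n + 1) ^ 2).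
Proof.
  unfold basel_ratio. pose proof (basel_int_rec n) as h.
  pose proof (wallis_int_even_pos n). pose proof (pos_INR n).
  replace (2 * S n)%nat with (S (S (2 * n))) by lia.
  assert (hB : basel_int (S n) = ((INR n + 1) * (2 * INR n + 1) * basel_int n
                                  - wallis_int (S (S (2 * n)))) / (2 * (INR n + 1) ^ 2)).
  { apply (Rmult_eq_reg_l (2 * (INR n + 1) ^ 2)); [field_simplify; lra | nra]. }
  rewrite hB, wallis_int_even_S. field. lra.
Qed.

Lemma basel_ratio_0 : basel_ratio 0 = PI ^ 2 / 12.
Proof.
  unfold basel_ratio. rewrite Nat.mul_0_r, basel_int_0, wallis_int_0.
  pose proof PI_RGT_0. field. lra.
Qed.

Lemma basel_eq n : basel n = 2 * (basel_ratio 0 - basel_ratio n).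
Proof.
  induction n as [|n IH]; [simpl; ring |].
  rewrite basel_S, IH. pose proof (basel_ratio_step n). pose proof (pos_INR n).
  replace (basel_ratio (S n)) with (basel_ratio n - 1 / (2 * (INR n + 1) ^ 2)) by lra.
  field. lra.
Qed.

Lemma basel_ratio_bound n : 0 <= basel_ratio (S n) <= 1 / (2 * INR n + 1).
Proof.
  unfold basel_ratio. pose proof (basel_int_upper n). pose proof (basel_int_nonneg (S n)).
  pose proof (wallis_int_even_pos n). pose proof (pos_INR n).
  replace (2 * S n)%nat with (S (S (2 * n))) by lia.
  rewrite wallis_int_even_S in *.
  set (I0 := wallis_int (2 * n)) in *.
  assert (0 < (2 * INR n + 1) / (2 * INR n + 2) * I0)
    by (apply Rmult_lt_0_compat; [apply Rdiv_lt_0_compat |]; lra).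
  split; [apply Rdiv_le_0_compat; lra |].
  apply (Rmult_le_reg_r ((2 * INR n + 1) / (2 * INR n + 2) * I0)); [lra |].
  unfold Rdiv at 1. rewrite Rmult_assoc, Rinv_l, Rmult_1_r by lra.
  apply Rle_trans with (1 := H). right. field. lra.
Qed.

Lemma basel_cv : Un_cv basel (PI ^ 2 / 6).
Proof.
  apply (Un_cv_abs_le basel (fun n => 4 / (INR n + 1)) _ 1); [| apply Un_cv_div_INR_S].
  intros [|m] hm; [lia |].
  rewrite basel_eq, basel_ratio_0. pose proof (basel_ratio_bound m). pose proof (pos_INR m).
  replace (2 * (PI ^ 2 / 12 - basel_ratio (S m)) - PI ^ 2 / 6) with (- (2 * basel_ratio (S m)))
    by field.
  rewrite Rabs_Ropp, Rabs_right, S_INR by lra.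
  apply Rle_trans with (2 * (1 / (2 * INR m + 1))); [lra |].
  apply Rmult_le_reg_r with ((2 * INR m + 1) * (INR m + 1 + 1)); [nra |].
  field_simplify; nra.
Qed.

Lemma wallis_basel_cv : Un_cv (fun n => wallis n * basel n / 4) (PI / 12).
Proof.
  replace (PI / 12) with (2 / PI * (PI ^ 2 / 6) * / 4) by (pose proof PI_RGT_0; field; lra).
  apply (CV_mult _ (fun _ => / 4)); [apply CV_mult; [apply wallis_cv | apply basel_cv] |].
  apply Un_cv_const.
Qed.

(** * Convergence of the series *)

Definition series_term (k : nat) : R := (4 * INR k + 1) * alt_cube k * alt_sq_sum k.

Definition abs_term (k : nat) : R := - (4 * INR k + 1) * half_poch k ^ 3 * alt_sq_sum k.

Lemma alt_sq_sum_bounds k : 3/4 <= - alt_sq_sum (S k) <= 1 - 1 / (4 * (INR k + 1)).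
Proof.
  induction k as [|k IH]; rewrite alt_sq_sum_S; [simpl; lra |].
  rewrite S_INR. pose proof (pos_INR k).
  assert (e1 : 1 / (2 * (INR k + 1) + 2) ^ 2 <= 1 / (2 * (INR k + 1) + 1) ^ 2).
  { apply Rmult_le_compat_l; [lra |]. apply Rinv_le_contravar; nra. }
  assert (e2 : 1 / (2 * (INR k + 1) + 1) ^ 2 <= 1 / (4 * (INR k + 1) * (INR k + 2))).
  { apply Rmult_le_compat_l; [lra |]. apply Rinv_le_contravar; nra. }
  assert (0 <= 1 / (2 * (INR k + 1) + 2) ^ 2)
    by (apply Rdiv_le_0_compat; [lra | apply pow_lt; lra]).
  replace (1 / (4 * (INR k + 1 + 1)))
    with (1 / (4 * (INR k + 1)) - 1 / (4 * (INR k + 1) * (INR k + 2)))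
    by (field; lra).
  lra.
Qed.

Lemma alt_sq_sum_range k : -1 <= alt_sq_sum k <= 0.
Proof.
  destruct k as [|k]; [simpl; lra |].
  pose proof (alt_sq_sum_bounds k). pose proof (pos_INR k).
  assert (0 < 1 / (4 * (INR k + 1))) by (apply Rdiv_lt_0_compat; lra). lra.
Qed.

Lemma wallis_le_1 n : wallis n <= 1.
Proof.
  induction n as [|n IH]; [unfold wallis; rewrite half_poch_0; simpl; lra |].
  rewrite wallis_S. unfold wallis_ratio. pose proof (pos_INR n).
  assert (0 <= wallis n) by (unfold wallis; pose proof (half_poch_pos n); nra).
  assert ((2 * INR n + 1) * (2 * INR n + 3) / (4 * (INR n + 1) ^ 2) <= 1).
  { apply Rmult_le_reg_r with (4 * (INR n + 1) ^ 2); [nra |].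
    unfold Rdiv. rewrite Rmult_assoc, Rinv_l, Rmult_1_r by nra. nra. }
  nra.
Qed.

Lemma abs_term_nonneg k : 0 <= abs_term k.
Proof.
  unfold abs_term. pose proof (alt_sq_sum_range k). pose proof (pos_INR k).
  assert (0 < half_poch k ^ 3) by (apply pow_lt, half_poch_pos).
  assert (0 <= (4 * INR k + 1) * half_poch k ^ 3) by nra. nra.
Qed.

(* [abs_term_decr] with [x = k], [h = - alt_sq_sum k] and the denominators cleared. *)
Lemma abs_term_ratio_poly x h : 1 <= x -> 3/4 <= h ->
  (4*x+5)*(2*x+1)^3*(h*(2*x+1)^2*(2*x+2)^2 + (2*x+2)^2 - (2*x+1)^2)
  <= (4*x+1)*h*(2*x+2)^5*(2*x+1)^2.
Proof.
  intros hx hh.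
  assert (P : 0 <= 3/4*(2*x+2)^2*(16*x^3+36*x^2+22*x+3) - (4*x+5)*(2*x+1)*(4*x+3)) by nra.
  assert (Q : 0 <= (2*x+1)^2*(2*x+2)^2*(16*x^3+36*x^2+22*x+3)) by (apply Rmult_le_pos; nra).
  replace ((4*x+1)*h*(2*x+2)^5*(2*x+1)^2) with
    ((4*x+5)*(2*x+1)^3*(h*(2*x+1)^2*(2*x+2)^2 + (2*x+2)^2 - (2*x+1)^2)
     + (h * ((2*x+1)^2*(2*x+2)^2*(16*x^3+36*x^2+22*x+3)) - (4*x+5)*(2*x+1)^3*(4*x+3)))
    by ring.
  assert (0 <= (2*x+1)^2 * (3/4*(2*x+2)^2*(16*x^3+36*x^2+22*x+3) - (4*x+5)*(2*x+1)*(4*x+3)))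
    by (apply Rmult_le_pos; nra).
  nra.
Qed.

Lemma abs_term_decr i : abs_term (S (S i)) <= abs_term (S i).
Proof.
  unfold abs_term. set (k := S i).
  rewrite alt_sq_sum_S, half_poch_S, S_INR.
  assert (hx : 1 <= INR k) by (unfold k; rewrite S_INR; pose proof (pos_INR i); lra).
  pose proof (alt_sq_sum_bounds i) as hb. fold k in hb.
  set (h := - alt_sq_sum k) in *. set (x := INR k) in *.
  pose proof (half_poch_pos k) as ha. set (A := half_poch k) in *.
  replace (alt_sq_sum k) with (- h) by (unfold h; ring).
  pose proof (abs_term_ratio_poly x h hx (proj1 hb)).
  assert (0 < A ^ 3) by (apply pow_lt; lra).
  assert (0 < / ((2*x+2)^5*(2*x+1)^2))
    by (apply Rinv_0_lt_compat, Rmult_lt_0_compat; apply pow_lt; lra).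
  replace (- (4 * (x + 1) + 1) * (A * (1 / 2 + x) / (x + 1)) ^ 3
           * (- h + 1 / (2 * x + 2) ^ 2 - 1 / (2 * x + 1) ^ 2))
    with (A ^ 3 * ((4*x+5)*(2*x+1)^3*(h*(2*x+1)^2*(2*x+2)^2 + (2*x+2)^2 - (2*x+1)^2))
          * / ((2*x+2)^5*(2*x+1)^2)) by (field; lra).
  replace (- (4 * x + 1) * A ^ 3 * - h)
    with (A ^ 3 * ((4*x+1)*h*(2*x+2)^5*(2*x+1)^2) * / ((2*x+2)^5*(2*x+1)^2)) by (field; lra).
  apply Rmult_le_compat_r; [lra |]. apply Rmult_le_compat_l; lra.
Qed.

Lemma abs_term_sq_le k : abs_term k ^ 2 <= 4 / (INR k + 1).
Proof.
  unfold abs_term. pose proof (alt_sq_sum_range k). pose proof (half_poch_pos k).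
  pose proof (pos_INR k). pose proof (wallis_le_1 k) as hc. unfold wallis in hc.
  set (y := (2 * INR k + 1) * half_poch k ^ 2) in *.
  assert (hy0 : 0 <= y) by (unfold y; nra).
  assert (hy3 : y ^ 3 <= 1) by (pose proof (pow_incr y 3); simpl in *; nra).
  assert (0 < half_poch k ^ 3) by (apply pow_lt; lra).
  apply Rle_trans with (((4 * INR k + 1) * half_poch k ^ 3) ^ 2).
  { replace ((- (4 * INR k + 1) * half_poch k ^ 3 * alt_sq_sum k) ^ 2)
      with (((4 * INR k + 1) * half_poch k ^ 3) ^ 2 * alt_sq_sum k ^ 2) by ring.
    rewrite <- (Rmult_1_r (((4 * INR k + 1) * half_poch k ^ 3) ^ 2)) at 2.
    apply Rmult_le_compat_l; nra. }
  replace (((4 * INR k + 1) * half_poch k ^ 3) ^ 2)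
    with (y ^ 3 * ((4 * INR k + 1) ^ 2 / (2 * INR k + 1) ^ 3)) by (unfold y; field; lra).
  assert (0 < (2 * INR k + 1) ^ 3) by (apply pow_lt; lra).
  apply Rle_trans with ((4 * INR k + 1) ^ 2 / (2 * INR k + 1) ^ 3).
  - rewrite <- (Rmult_1_l ((4 * INR k + 1) ^ 2 / (2 * INR k + 1) ^ 3)) at 2.
    apply Rmult_le_compat_r; [apply Rdiv_le_0_compat; nra | lra].
  - apply Rmult_le_reg_r with ((2 * INR k + 1) ^ 3 * (INR k + 1)); [nra |].
    field_simplify; [nra | lra | lra].
Qed.

Lemma abs_term_cv : Un_cv abs_term 0.
Proof.
  intros eps he. destruct (Un_cv_div_INR_S 4 (eps ^ 2) ltac:(nra)) as [N hN].
  exists N. intros n hn. specialize (hN n hn). unfold Rdist in *. rewrite Rminus_0_r in *.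
  pose proof (abs_term_nonneg n). pose proof (abs_term_sq_le n). pose proof (pos_INR n).
  rewrite Rabs_right in hN by (apply Rle_ge, Rdiv_le_0_compat; lra).
  rewrite Rabs_right by lra. nra.
Qed.

Lemma series_term_alt i : series_term (S i) = tg_alt (fun j => abs_term (S j)) i.
Proof. unfold series_term, abs_term, tg_alt, alt_cube. simpl pow at 1. ring. Qed.

Lemma series_term_0 : series_term 0 = 0.
Proof. unfold series_term. simpl alt_sq_sum. ring. Qed.

Lemma series_term_summable : { l | Un_cv (sum_f_R0 series_term) l }.
Proof.
  destruct (alternated_series (fun j => abs_term (S j))) as [l hl].
  - intro i. apply abs_term_decr.
  - apply is_lim_seq_Reals, (is_lim_seq_incr_1 abs_term 0), is_lim_seq_Reals, abs_term_cv.
  - exists l. apply is_lim_seq_Reals, is_lim_seq_incr_1, is_lim_seq_Reals.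
    apply (Un_cv_ext (sum_f_R0 (tg_alt (fun j => abs_term (S j))))); [| exact hl].
    intro N. induction N as [|N IH].
    + simpl sum_f_R0. rewrite series_term_0, series_term_alt. ring.
    + rewrite tech5, IH, (tech5 _ (S N)), series_term_alt. reflexivity.
Qed.

(** * Removing the weights *)

Lemma sum_by_parts (u w : nat -> R) N :
  sum_f_R0 (fun k => u k * w k) N =
  sum_f_R0 (fun k => sum_f_R0 u k * (w k - w (S k))) N + sum_f_R0 u N * w (S N).
Proof. induction N as [|N IH]; simpl; [| rewrite IH]; ring. Qed.

Lemma sum_ge_term (f : nat -> R) K k : (forall j, 0 <= f j) -> (k <= K)%nat -> f k <= sum_f_R0 f K.
Proof.
  intros hf. induction 1.
  - destruct k; [simpl; lra |]. rewrite tech5. pose proof (cond_pos_sum f k hf). lra.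
  - rewrite tech5. pose proof (hf (S m)). lra.
Qed.

Section Regular_weights.

Variable w : nat -> nat -> R.
Hypothesis w_0 : forall n, w n 0 = 1.
Hypothesis w_decr : forall n k, w n (S k) <= w n k.
Hypothesis w_end : forall n, w n (S n) = 0.
Hypothesis w_cv : forall k, Un_cv (fun n => w n k) 1.

Lemma w_anti n k1 k2 : (k1 <= k2)%nat -> w n k2 <= w n k1.
Proof. induction 1; [lra |]. pose proof (w_decr n m). lra. Qed.

Lemma sum_w_decrements n m : sum_f_R0 (fun k => w n k - w n (S k)) m = 1 - w n (S m).
Proof.
  rewrite (sum_eq _ (fun k => (fun j => - w n j) (S k) - (fun j => - w n j) k))
    by (intros; simpl; ring).
  rewrite (sum_telescope (fun j => - w n j)), w_0. ring.
Qed.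

Lemma sum_w_decrements_split (d : nat -> R) n K M e m :
  0 <= M -> 0 <= e ->
  (forall k, (k < K)%nat -> Rabs (d k) <= M) ->
  (forall k, (K <= k)%nat -> Rabs (d k) <= e) ->
  sum_f_R0 (fun k => Rabs (d k) * (w n k - w n (S k))) m
    <= M * (1 - w n (Nat.min (S m) K)) + e * (1 - w n (S m)).
Proof.
  intros hM he h1 h2.
  induction m as [|m IH].
  - simpl sum_f_R0. pose proof (w_decr n 0). rewrite w_0 in *.
    destruct K as [|K]; simpl Nat.min; rewrite ?w_0.
    + specialize (h2 0%nat ltac:(lia)). nra.
    + specialize (h1 0%nat ltac:(lia)). nra.
  - rewrite tech5. pose proof (w_decr n (S m)). pose proof (Rabs_pos (d (S m))).
    destruct (le_lt_dec K (S m)) as [hk | hk].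
    + rewrite Nat.min_r by lia. rewrite Nat.min_r in IH by lia.
      specialize (h2 (S m) hk). nra.
    + rewrite Nat.min_l by lia. rewrite Nat.min_l in IH by lia.
      specialize (h1 (S m) hk). nra.
Qed.

Lemma weighted_sum_dist_le (u : nat -> R) l n :
  Rabs (sum_f_R0 (fun k => u k * w n k) n - l)
  <= sum_f_R0 (fun k => Rabs (sum_f_R0 u k - l) * (w n k - w n (S k))) n.
Proof.
  rewrite sum_by_parts, w_end, Rmult_0_r, Rplus_0_r.
  replace (sum_f_R0 (fun k => sum_f_R0 u k * (w n k - w n (S k))) n - l)
    with (sum_f_R0 (fun k => (sum_f_R0 u k - l) * (w n k - w n (S k))) n).
  2:{ rewrite (sum_eq _ (fun k => sum_f_R0 u k * (w n k - w n (S k)) - (w n k - w n (S k)) * l))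
        by (intros; ring).
      rewrite minus_sum, <- scal_sum, sum_w_decrements, w_end. ring. }
  eapply Rle_trans; [apply sum_f_R0_triangle |]. right.
  apply sum_eq. intros k _. rewrite Rabs_mult, (Rabs_right (w n k - w n (S k))); [reflexivity |].
  pose proof (w_decr n k). lra.
Qed.

Lemma weighted_sum_cv (u : nat -> R) l :
  Un_cv (sum_f_R0 u) l -> Un_cv (fun n => sum_f_R0 (fun k => u k * w n k) n) l.
Proof.
  intros hB eps he.
  destruct (hB (eps/2) ltac:(lra)) as [K hK].
  set (M := sum_f_R0 (fun j => Rabs (sum_f_R0 u j - l)) K).
  assert (hM : 0 <= M) by (apply cond_pos_sum; intros; apply Rabs_pos).
  destruct (w_cv K (eps / (2 * (M + 1)))) as [N hN]; [apply Rdiv_lt_0_compat; lra |].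
  exists N. intros n hn. specialize (hN n hn). unfold Rdist in *.
  eapply Rle_lt_trans; [apply weighted_sum_dist_le |].
  eapply Rle_lt_trans;
    [apply (sum_w_decrements_split (fun k => sum_f_R0 u k - l) n K M (eps/2) n hM ltac:(lra)) |].
  - intros k hk. apply (sum_ge_term (fun j => Rabs (sum_f_R0 u j - l)));
      [intros; apply Rabs_pos | lia].
  - intros k hk. apply Rlt_le, hK. lia.
  - rewrite w_end.
    pose proof (w_anti n (Nat.min (S n) K) K ltac:(lia)).
    pose proof (w_anti n 0 K ltac:(lia)). rewrite w_0 in *.
    assert (1 - w n K < eps / (2 * (M + 1))).
    { rewrite Rabs_minus_sym in hN. pose proof (Rle_abs (1 - w n K)). lra. }
    assert (M * (1 - w n (Nat.min (S n) K)) <= M * (eps / (2 * (M + 1))))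
      by (apply Rmult_le_compat_l; lra).
    assert (M * (eps / (2 * (M + 1))) < eps / 2).
    { apply Rmult_lt_reg_r with (2 * (M + 1)); [lra |].
      replace (M * (eps / (2 * (M + 1))) * (2 * (M + 1))) with (M * eps) by (field; lra).
      nra. }
    lra.
Qed.

End Regular_weights.

Lemma weight_nonneg n k : 0 <= weight n k.
Proof.
  induction k as [|k IH]; [simpl; lra |].
  destruct (le_lt_dec n k) as [hk | hk]; [rewrite weight_vanish by lia; lra |].
  rewrite weight_S. pose proof (lt_INR _ _ hk). pose proof (pos_INR k).
  apply Rdiv_le_0_compat; [apply Rmult_le_pos |]; lra.
Qed.

Lemma weight_decr n k : weight n (S k) <= weight n k.
Proof.
  destruct (le_lt_dec n k) as [hk | hk].
  - rewrite (weight_vanish n (S k)) by lia. apply weight_nonneg.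
  - rewrite weight_S. pose proof (lt_INR _ _ hk). pose proof (pos_INR k).
    pose proof (weight_nonneg n k).
    assert (0 <= (INR n - INR k) / (INR n + 3/2 + INR k) <= 1).
    { split; [apply Rdiv_le_0_compat; lra |].
      apply Rmult_le_reg_r with (INR n + 3/2 + INR k); [lra |].
      unfold Rdiv. rewrite Rmult_assoc, Rinv_l, Rmult_1_r by lra. lra. }
    unfold Rdiv in *. rewrite Rmult_assoc. nra.
Qed.

Lemma weight_end n : weight n (S n) = 0.
Proof. apply weight_vanish. lia. Qed.

Lemma weight_cv k : Un_cv (fun n => weight n k) 1.
Proof.
  induction k as [|k IH]; [exact (Un_cv_const 1) |].
  apply (Un_cv_ext (fun n => weight n k * ((INR n - INR k) / (INR n + 3/2 + INR k))));
    [intro n; rewrite weight_S; unfold Rdiv; ring |].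
  replace 1 with (1 * 1) by ring. apply CV_mult; [exact IH |].
  apply (Un_cv_abs_le _ (fun n => (2 * INR k + 3/2) / (INR n + 1)) _ 0); [| apply Un_cv_div_INR_S].
  intros n _. pose proof (pos_INR n). pose proof (pos_INR k).
  replace ((INR n - INR k) / (INR n + 3 / 2 + INR k) - 1)
    with (- ((2 * INR k + 3/2) / (INR n + 3 / 2 + INR k))) by (field; lra).
  rewrite Rabs_Ropp, Rabs_right by (apply Rle_ge, Rdiv_le_0_compat; lra).
  unfold Rdiv. apply Rmult_le_compat_l; [lra |]. apply Rinv_le_contravar; lra.
Qed.

Lemma inner_sum_eq k : inner_sum (S k) = alt_sq_sum (S k).
Proof.
  unfold inner_sum, sum_f. replace (2 * S k - 1)%nat with (S (2 * k)) by lia.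
  induction k as [|k IH]; [simpl; field |].
  replace (S (2 * S k)) with (S (S (S (2 * k)))) by lia.
  rewrite tech5, tech5, IH.
  replace (S (S (2 * k)) + 1)%nat with (S (2 * S k)) by lia.
  replace (S (S (S (2 * k))) + 1)%nat with (2 * S (S k))%nat by lia.
  rewrite pow_1_odd, pow_1_even, (alt_sq_sum_S (S k)), !S_INR, !INR_double, !S_INR.
  simpl (INR 0). pose proof (pos_INR k). field. lra.
Qed.

Lemma partial_sum_eq N : partial_sum N = sum_f_R0 series_term N.
Proof.
  induction N as [|N IH]; simpl partial_sum; [simpl; rewrite series_term_0; ring |].
  rewrite IH, tech5. f_equal.
  unfold term, series_term, alt_cube, half_poch. rewrite inner_sum_eq.
  assert (0 < INR (fact (S N))) by (apply lt_0_INR, lt_O_fact).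
  field. lra.
Qed.

Lemma sum_weighted_series_term n :
  sum_f_R0 (fun k => series_term k * weight n k) n = wallis n * basel n / 4.
Proof.
  rewrite <- sum_dougall_H, (sum_eq _ (fun k => 4 * alt_sq_sum k * dougall n k * / 4)).
  - rewrite <- scal_sum. unfold Rdiv. ring.
  - intros k _. unfold series_term, dougall. field.
Qed.

Theorem theorem1p1 : Un_cv partial_sum (PI / 12).
Proof.
  destruct series_term_summable as [l hl].
  assert (hw : Un_cv (fun n => sum_f_R0 (fun k => series_term k * weight n k) n) l)
    by exact (weighted_sum_cv weight (fun n => eq_refl) weight_decr weight_end weight_cv _ _ hl).
  assert (hpi : Un_cv (fun n => sum_f_R0 (fun k => series_term k * weight n k) n) (PI / 12)).
  { apply (Un_cv_ext (fun n => wallis n * basel n / 4)); [| exact wallis_basel_cv].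
    intro n. symmetry. apply sum_weighted_series_term. }
  rewrite (UL_sequence _ _ _ hw hpi) in hl.
  apply (Un_cv_ext (sum_f_R0 series_term)); [| exact hl].
  intro n. symmetry. apply partial_sum_eq.
Qed.
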